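(* Let $P_n(x)$ be a real polynomial all of whose roots are real, with $m\ge 3$ distinct roots $p_1<\dots<p_m$. Let $\mu=\min_{i\ne j}|p_i-p_j|$ and $M=\max_{i,j}|p_i-p_j|$. Define $$\mu_0^2=\Big[\sum_{1\le i<j\le m}(p_i-p_j)^{-2}\Big]^{-1},\qquad \mu_k^2=\Big(\sum_{1\le i<j\le m}\frac{1}{(p_i-p_j)^2-\mu_{k-1}^2}\Big)^{-1}+\mu_{k-1}^2\ (k\ge1),$$ $$M_0^2=\sum_{1\le i<j\le m}(p_j-p_i)^2,\qquad M_k^2=\Big(\sum_{1\le i<j\le m}\frac{1}{(p_i-p_j)^2-M_{k-1}^2}\Big)^{-1}+M_{k-1}^2\ (k\ge1).$$ Then these are well defined with $0<\mu_k<\mu$ and $M_k>M$ for all $k\ge0$, and each $\mu_k^2$ and each $M_k^2$ ($k=0,1,2,\dots$) can be expressed as a rational function of the coefficients of $P_n(x)$. *)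

From mathcomp Require Import all_boot all_order all_algebra.
From mathcomp Require Import mpoly.
Set Implicit Arguments. Unset Strict Implicit. Unset Printing Implicit Defensive.
Import Order.TTheory GRing.Theory Num.Theory.
Local Open Scope ring_scope.

Section Defs.
Variable R : rcfType.

Definition all_roots_real (P : {poly R}) : Prop :=
  exists rs : seq R, P = lead_coef P *: \prod_(r <- rs) ('X - r%:P).

Definition pairsum (m : nat) (p : 'I_m -> R) (f : R -> R) : R :=
  \sum_(i < m) \sum_(j < m | (i < j)%N) f (p i - p j).

Definition Mdiam (m : nat) (p : 'I_m -> R) : R :=
  \big[Num.max/0]_(i < m) \big[Num.max/0]_(j < m) `|p i - p j|.

(* mu = min_{i <> j} |p_i - p_j|  (the seed Mdiam p is itself one of the
   values |p_i - p_j| as soon as m >= 2, so it does not affect the minimum) *)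
Definition mudist (m : nat) (p : 'I_m -> R) : R :=
  \big[Num.min/Mdiam p]_(i < m) \big[Num.min/Mdiam p]_(j < m | i != j) `|p i - p j|.

Fixpoint mu2 (m : nat) (p : 'I_m -> R) (k : nat) : R :=
  match k with
  | 0 => (pairsum p (fun d => (d ^+ 2)^-1))^-1
  | k'.+1 => (pairsum p (fun d => (d ^+ 2 - mu2 p k')^-1))^-1 + mu2 p k'
  end.

Fixpoint M2 (m : nat) (p : 'I_m -> R) (k : nat) : R :=
  match k with
  | 0 => pairsum p (fun d => d ^+ 2)
  | k'.+1 => (pairsum p (fun d => (d ^+ 2 - M2 p k')^-1))^-1 + M2 p k'
  end.

Definition muk (m : nat) (p : 'I_m -> R) (k : nat) : R := Num.sqrt (mu2 p k).
Definition Mk (m : nat) (p : 'I_m -> R) (k : nat) : R := Num.sqrt (M2 p k).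

(* Well-definedness of the recursion with value sequence s: every inverse
   taken in the definition is the inverse of a nonzero quantity. *)
Definition wd_step (m : nat) (p : 'I_m -> R) (c : R) : Prop :=
  (forall i j : 'I_m, (i < j)%N -> (p i - p j) ^+ 2 - c != 0) /\
  pairsum p (fun d => (d ^+ 2 - c)^-1) != 0.

Definition coefs (P : {poly R}) : 'I_(size P) -> R := fun i => P`_i.
Arguments coefs : clear implicits.

(* x is the value at the coefficients of P of a rational function with
   rational coefficients in the coefficients of P (denominator nonzero there) *)
Definition rat_fun_of_coefs (P : {poly R}) (x : R) : Prop :=
  exists N D : {mpoly rat[size P]},
    (map_mpoly (ratr : rat -> R) D).@[coefs P] != 0 /\
    x = (map_mpoly (ratr : rat -> R) N).@[coefs P]
        / (map_mpoly (ratr : rat -> R) D).@[coefs P].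

End Defs.

From HB Require Import structures.
From mathcomp Require Import all_boot all_order all_algebra.
From mathcomp Require Import perm mpoly ring.
From Stdlib Require Import ClassicalEpsilon.
Set Implicit Arguments. Unset Strict Implicit. Unset Printing Implicit Defensive.
Import Order.TTheory GRing.Theory Num.Theory.
Local Open Scope ring_scope.

(* Both recursions iterate c |-> (sum_{i<j} 1/(d_ij^2 - c))^-1 + c with d_ij = p_i - p_j.
   If c lies below every d_ij^2, all summands are positive and, as m >= 3 gives at
   least two pairs, the sum exceeds each single summand 1/(d_ij^2 - c); so the new
   value lies strictly between c and every d_ij^2.  If c lies above every d_ij^2, the
   same comparison keeps the new value above them.  Starting from 0 and from
   sum d_ij^2 yields the bounds.
   For rationality, let S be the field of values at the coefficients of P of rational
   functions over Q.  The squarefree part P / gcd(P, P') is over S and is associate to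
   prod_i (X - p_i), so the elementary symmetric functions of the p_i lie in S.  Then
   so do the coefficients of F = prod_{i <> j} (X - d_ij^2), and each step maps S into
   S because sum_{i<j} 1/(d_ij^2 - c) = - F'(c) / (2 F(c)). *)

Section PairSums.
Variables (R : rcfType) (m : nat) (p : 'I_m -> R).

Lemma pairsumE (f : R -> R) :
  pairsum p f = \sum_(u : 'I_m * 'I_m | (u.1 < u.2)%N) f (p u.1 - p u.2).
Proof. by rewrite /pairsum pair_big_dep. Qed.

Lemma eq_pairsum (f g : R -> R) : f =1 g -> pairsum p f = pairsum p g.
Proof. by move=> fg; apply: eq_bigr => i _; apply: eq_bigr => j _. Qed.

Lemma sum_distinct_pairs (f : R -> R) : (forall d, f (- d) = f d) ->
  \sum_(u : 'I_m * 'I_m | u.1 != u.2) f (p u.1 - p u.2) = pairsum p f *+ 2.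
Proof.
move=> f_even; rewrite pairsumE (bigID (fun u : 'I_m * 'I_m => (u.1 < u.2)%N)) /=.
rewrite mulr2n; congr (_ + _).
  by apply: eq_bigl => u; rewrite andb_idl // => /ltn_eqF; rewrite -val_eqE => ->.
rewrite (reindex_inj (h := fun u : 'I_m * 'I_m => (u.2, u.1))); last first.
  by move=> [a b] [c d] /= [-> ->].
apply: eq_big => [[a b]|[a b] _] /=; last by rewrite -f_even opprB.
by rewrite -val_eqE /= -leqNgt neq_ltn; case: ltngtP.
Qed.

Lemma sqr_diff_neq (Q : R -> Prop) :
  (forall i j : 'I_m, (i < j)%N -> Q ((p i - p j) ^+ 2)) ->
  forall i j : 'I_m, i != j -> Q ((p i - p j) ^+ 2).
Proof.
move=> Qlt i j; rewrite -val_eqE neq_ltn => /orP [] ij; first exact: Qlt.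
by rewrite -sqrrN opprB; apply: Qlt.
Qed.

Hypothesis m_ge3 : (3 <= m)%N.

Lemma pairsum_gt (t : R -> R) (a b : 'I_m) : (a < b)%N ->
  (forall i j : 'I_m, (i < j)%N -> 0 < t (p i - p j)) ->
  t (p a - p b) < pairsum p t.
Proof.
move=> ab t_gt0; rewrite pairsumE (bigD1 (a, b)) //= ltrDl.
have [u [u_lt u_neq]] : exists u : 'I_m * 'I_m, (u.1 < u.2)%N /\ u != (a, b).
  pose o0 := Ordinal (ltnW (ltnW m_ge3)); pose o1 := Ordinal (ltnW m_ge3).
  pose o2 := Ordinal m_ge3.
  have [ab01|] := eqVneq (a, b) (o0, o1); last by exists (o0, o1); rewrite eq_sym.
  by exists (o0, o2); rewrite ab01 xpair_eqE.
rewrite (bigD1 u) /=; last by rewrite u_lt u_neq.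
apply: ltr_pwDl; first exact: t_gt0.
by apply: sumr_ge0 => v /andP [/andP [v_lt _] _]; apply/ltW/t_gt0.
Qed.

Lemma pairsum_gt0 (t : R -> R) :
  (forall i j : 'I_m, (i < j)%N -> 0 < t (p i - p j)) -> 0 < pairsum p t.
Proof.
have lt01 : (Ordinal (ltnW (ltnW m_ge3)) < Ordinal (ltnW m_ge3))%N by [].
by move=> t_gt0; apply: lt_trans (pairsum_gt lt01 t_gt0); apply: t_gt0.
Qed.

End PairSums.

Section Extremes.
Variables (R : rcfType) (m : nat) (p : 'I_m -> R).

Lemma Mdiam_lt (x : R) : 0 < x ->
  (forall i j : 'I_m, i != j -> `|p i - p j| < x) -> Mdiam p < x.
Proof.
move=> x_gt0 lt_x; apply: bigmax_lt => // i _; apply: bigmax_lt => // j _.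
by have [<-|] := eqVneq i j; [rewrite subrr normr0 | apply: lt_x].
Qed.

Lemma lt_mudist (x : R) : (1 < m)%N ->
  (forall i j : 'I_m, i != j -> x < `|p i - p j|) -> x < mudist p.
Proof.
move=> m_gt1 lt_x; pose i0 := Ordinal (ltnW m_gt1); pose i1 := Ordinal m_gt1.
have x_lt_Mdiam : x < Mdiam p.
  apply: (lt_le_trans (lt_x i0 i1 isT)).
  apply: le_trans (le_bigmax _ (fun j => `|p i0 - p j|) i1) _.
  exact: (le_bigmax _ (fun i => \big[Num.max/0]_(j < m) `|p i - p j|) i0).
by apply: lt_bigmin => // i _; apply: lt_bigmin => // j; apply: lt_x.
Qed.

End Extremes.

Section Recursion.
Variables (R : rcfType) (m : nat) (p : 'I_m -> R).
Hypotheses (m_ge3 : (3 <= m)%N) (p_incr : forall i j : 'I_m, (i < j)%N -> p i < p j).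

Definition pair_step (c : R) : R := (pairsum p (fun d => (d ^+ 2 - c)^-1))^-1 + c.

Lemma mu2_0 : mu2 p 0 = pair_step 0.
Proof.
by rewrite /pair_step addr0; congr _^-1; apply: eq_pairsum => d; rewrite subr0.
Qed.

Lemma mu2S k : mu2 p k.+1 = pair_step (mu2 p k). Proof. by []. Qed.

Lemma M2S k : M2 p k.+1 = pair_step (M2 p k). Proof. by []. Qed.

Lemma pairsum_invB (c : R) :
  pairsum p (fun d => (d ^+ 2 - c)^-1) = - pairsum p (fun d => (c - d ^+ 2)^-1).
Proof.
rewrite /pairsum -sumrN; apply: eq_bigr => i _; rewrite -sumrN.
by apply: eq_bigr => j _; rewrite -invrN opprB.
Qed.

Lemma sqr_diff_gt0 (i j : 'I_m) : (i < j)%N -> 0 < (p i - p j) ^+ 2.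
Proof. by move=> /p_incr; rewrite -subr_lt0 => /ltr0_neq0; rewrite exprn_even_gt0. Qed.

Section BelowPairs.
Variable c : R.
Hypothesis c_lt : forall i j : 'I_m, (i < j)%N -> c < (p i - p j) ^+ 2.

Let inv_gt0 (i j : 'I_m) : (i < j)%N -> 0 < ((p i - p j) ^+ 2 - c)^-1.
Proof. by move=> ij; rewrite invr_gt0 subr_gt0 c_lt. Qed.

Lemma wd_step_below : wd_step p c.
Proof.
split=> [i j ij|]; first by rewrite gt_eqF // subr_gt0 c_lt.
by rewrite gt_eqF // pairsum_gt0.
Qed.

Lemma pair_step_gt : c < pair_step c.
Proof. by rewrite /pair_step ltrDr invr_gt0 pairsum_gt0. Qed.

Lemma pair_step_below (i j : 'I_m) : (i < j)%N -> pair_step c < (p i - p j) ^+ 2.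
Proof.
move=> ij; have S_gt := pairsum_gt m_ge3 (t := fun d => (d ^+ 2 - c)^-1) ij inv_gt0.
have S_gt0 : 0 < pairsum p (fun d => (d ^+ 2 - c)^-1) :=
  lt_trans (inv_gt0 ij) S_gt.
by rewrite /pair_step -ltrBrDr invf_plt ?posrE ?subr_gt0 ?c_lt.
Qed.

End BelowPairs.

Section AbovePairs.
Variable c : R.
Hypothesis lt_c : forall i j : 'I_m, (i < j)%N -> (p i - p j) ^+ 2 < c.

Let inv_gt0 (i j : 'I_m) : (i < j)%N -> 0 < (c - (p i - p j) ^+ 2)^-1.
Proof. by move=> ij; rewrite invr_gt0 subr_gt0 lt_c. Qed.

Lemma wd_step_above : wd_step p c.
Proof.
split=> [i j ij|]; first by rewrite lt_eqF // subr_lt0 lt_c.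
by rewrite pairsum_invB oppr_eq0 gt_eqF // pairsum_gt0.
Qed.

Lemma pair_step_above (i j : 'I_m) : (i < j)%N -> (p i - p j) ^+ 2 < pair_step c.
Proof.
move=> ij; have S_gt := pairsum_gt m_ge3 (t := fun d => (c - d ^+ 2)^-1) ij inv_gt0.
have S_gt0 : 0 < pairsum p (fun d => (c - d ^+ 2)^-1) :=
  lt_trans (inv_gt0 ij) S_gt.
rewrite /pair_step pairsum_invB invrN [- _ + c]addrC ltrBrDl -ltrBrDr.
by rewrite invf_plt ?posrE ?subr_gt0 ?lt_c.
Qed.

End AbovePairs.

Lemma mu2_bounds k :
  0 < mu2 p k /\ forall i j : 'I_m, (i < j)%N -> mu2 p k < (p i - p j) ^+ 2.
Proof.
elim: k => [|k [mu2_gt0 mu2_lt]].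
  by rewrite mu2_0; split; [apply: pair_step_gt | apply: pair_step_below];
    apply: sqr_diff_gt0.
rewrite mu2S; split; last exact: pair_step_below.
exact: lt_trans (pair_step_gt mu2_lt).
Qed.

Lemma M2_above k (i j : 'I_m) : (i < j)%N -> (p i - p j) ^+ 2 < M2 p k.
Proof.
elim: k i j => [|k IH] i j ij; last by rewrite M2S; apply: pair_step_above.
by apply: (pairsum_gt m_ge3 ij (t := fun d => d ^+ 2)); apply: sqr_diff_gt0.
Qed.

Lemma M2_gt0 k : 0 < M2 p k.
Proof.
have lt01 : (Ordinal (ltnW (ltnW m_ge3)) < Ordinal (ltnW m_ge3))%N by [].
exact: lt_trans (sqr_diff_gt0 lt01) (M2_above k lt01).
Qed.

Lemma muk_lt_mudist k : muk p k < mudist p.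
Proof.
have [mu2_gt0 /(sqr_diff_neq (Q := fun x => mu2 p k < x)) mu2_lt] := mu2_bounds k.
apply: lt_mudist (ltnW m_ge3) _ => i j ij.
by rewrite /muk -sqrtr_sqr ltr_sqrt ?mu2_lt // (lt_trans mu2_gt0 (mu2_lt i j ij)).
Qed.

Lemma Mdiam_lt_Mk k : Mdiam p < Mk p k.
Proof.
apply: Mdiam_lt => [|i j ij]; first by rewrite sqrtr_gt0 M2_gt0.
rewrite /Mk -sqrtr_sqr ltr_sqrt ?M2_gt0 //.
exact: (sqr_diff_neq (Q := fun x => x < M2 p k) (M2_above k)).
Qed.

End Recursion.

Section RationalValues.
Variables (R : numFieldType) (n : nat) (v : 'I_n -> R).

Definition rat_eval (q : {mpoly rat[n]}) : R := (map_mpoly (ratr : rat -> R) q).@[v].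

Fact rat_eval_is_zmod_morphism : zmod_morphism rat_eval.
Proof. by move=> x y; rewrite /rat_eval !rmorphB. Qed.

Fact rat_eval_is_monoid_morphism : monoid_morphism rat_eval.
Proof. by split=> [|x y]; rewrite /rat_eval ?rmorph1 ?rmorphM. Qed.

HB.instance Definition _ :=
  GRing.isZmodMorphism.Build _ _ rat_eval rat_eval_is_zmod_morphism.
HB.instance Definition _ :=
  GRing.isMonoidMorphism.Build _ _ rat_eval rat_eval_is_monoid_morphism.

Lemma rat_eval_X i : rat_eval 'X_i = v i.
Proof. by rewrite /rat_eval /map_mpoly mmapX mmap1U mevalXU. Qed.

Definition rat_value (x : R) : Prop :=
  exists N D : {mpoly rat[n]}, rat_eval D != 0 /\ x = rat_eval N / rat_eval D.

Definition rat_values : {pred R} :=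
  fun x => if excluded_middle_informative (rat_value x) then true else false.

Lemma rat_valuesP x : reflect (rat_value x) (x \in rat_values).
Proof.
by rewrite unfold_in /rat_values; case: excluded_middle_informative; constructor.
Qed.

Lemma rat_eval_in q : rat_eval q \in rat_values.
Proof. by apply/rat_valuesP; exists q, 1; rewrite rmorph1 oner_neq0 divr1. Qed.

Fact rat_values_divring_closed : divring_closed rat_values.
Proof.
split; first by rewrite -(rmorph1 rat_eval) rat_eval_in.
  move=> _ _ /rat_valuesP [N1 [D1 [D1_neq0 ->]]] /rat_valuesP [N2 [D2 [D2_neq0 ->]]].
  apply/rat_valuesP; exists (N1 * D2 - N2 * D1), (D1 * D2).
  rewrite !rmorphB !rmorphM /= mulf_neq0 //; split=> //; field.
  by rewrite D1_neq0 D2_neq0.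
move=> _ _ /rat_valuesP [N1 [D1 [D1_neq0 ->]]] /rat_valuesP [N2 [D2 [D2_neq0 ->]]].
have [N2_0|N2_neq0] := eqVneq (rat_eval N2) 0.
  by rewrite N2_0 mul0r invr0 mulr0 -(rmorph0 rat_eval) rat_eval_in.
apply/rat_valuesP; exists (N1 * D2), (D1 * N2).
rewrite !rmorphM /= mulf_neq0 //; split=> //; field.
by rewrite D1_neq0 D2_neq0 N2_neq0.
Qed.

HB.instance Definition _ :=
  GRing.isDivringClosed.Build R rat_values rat_values_divring_closed.

End RationalValues.

Section SubfieldPolynomials.
Variables (F : fieldType) (S : divringClosed F).

(* A subtype making S a field, so that [divp] and [gcdp] commute with the inclusion. *)
Record subfield_of := SubfieldOf { subfield_val : F; _ : subfield_val \in S }.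
HB.instance Definition _ := [isSub for subfield_val].
HB.instance Definition _ := [Choice of subfield_of by <:].
HB.instance Definition _ := [SubChoice_isSubIntegralDomain of subfield_of by <:].
HB.instance Definition _ := [SubIntegralDomain_isSubField of subfield_of by <:].

Lemma polyOver_subfieldP (p : {poly F}) :
  reflect (exists q : {poly subfield_of}, p = map_poly val q) (p \is a polyOver S).
Proof.
apply: (iffP polyOverP) => [Sp | [q ->] i]; last by rewrite coef_map; apply: valP.
exists (\poly_(i < size p) SubfieldOf (Sp i)); rewrite -{1}[p]coefK.
by apply/polyP => i; rewrite coef_map !coef_poly; case: ifP.
Qed.

Lemma divp_polyOver : {in polyOver S &, forall p q, p %/ q \is a polyOver S}.
Proof.
move=> _ _ /polyOver_subfieldP [p ->] /polyOver_subfieldP [q ->].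
by apply/polyOver_subfieldP; exists (p %/ q); rewrite map_divp.
Qed.

Lemma gcdp_polyOver : {in polyOver S &, forall p q, gcdp p q \is a polyOver S}.
Proof.
move=> _ _ /polyOver_subfieldP [p ->] /polyOver_subfieldP [q ->].
by apply/polyOver_subfieldP; exists (gcdp p q); rewrite gcdp_map.
Qed.

End SubfieldPolynomials.

Section SquarefreePart.
Variable F : numFieldType.

Lemma prod_XsubC_undup (rs : seq F) : exists H : {poly F},
  \prod_(r <- rs) ('X - r%:P) = H * \prod_(r <- undup rs) ('X - r%:P) /\
  H %| (\prod_(r <- rs) ('X - r%:P))^`().
Proof.
elim: rs => [|a rs [H [prodE H_dvd]]] /=.
  by exists 1; rewrite !big_nil mul1r derivC dvdp0.
rewrite big_cons derivM derivXsubC mul1r.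
case: ifP => a_rs.
  exists (('X - a%:P) * H); split; first by rewrite prodE mulrA.
  apply: dvdp_add; last exact: dvdp_mul.
  rewrite prodE mulrC dvdp_mul // dvdp_XsubCl root_prod_XsubC mem_undup.
  exact: a_rs.
exists H; split; first by rewrite big_cons prodE mulrCA.
by apply: dvdp_add; [rewrite prodE dvdp_mulIl | apply: dvdp_mull].
Qed.

Lemma root_cofactor_deriv (P q g : {poly F}) (x : F) : P != 0 -> root P x ->
  P = q * g -> g %| P^`() -> root q x.
Proof.
move=> P_neq0 Px P_eq g_dvd; apply: contraT => qNx.
have [[|k] [A Ax PE]] := multiplicity_XsubC P x; rewrite P_neq0 /= in Ax.
  by move: Px; rewrite PE expr0 mulr1 (negbTE Ax).
have coprime_q : coprimep (('X - x%:P) ^+ k.+1) q.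
  by rewrite coprimep_expl // coprimep_sym coprimep_XsubC.
have : ('X - x%:P) ^+ k.+1 %| P^`().
  apply: dvdp_trans g_dvd; rewrite -(Gauss_dvdpr _ coprime_q) -P_eq PE.
  exact: dvdp_mull.
(* x has multiplicity exactly k in P^`(): A(x) <> 0 and the characteristic is 0. *)
pose B := A^`() * ('X - x%:P) + A *+ k.+1.
have -> : P^`() = ('X - x%:P) ^+ k * B.
  rewrite PE derivM deriv_exp derivXsubC mul1r /B /= exprSr [RHS]mulrDr mulrCA.
  by congr (_ + _); rewrite !mulrnAr mulrC.
rewrite exprSr dvdp_mul2l ?expf_neq0 ?polyXsubC_eq0 // dvdp_XsubCl /root /B.
rewrite hornerD hornerM hornerXsubC subrr mulr0 add0r hornerMn mulrn_eq0 /=.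
by move/eqP => Ax0; rewrite /root Ax0 eqxx in Ax.
Qed.

Lemma squarefree_part_eqp (P : {poly F}) (rs : seq F) : P != 0 ->
  P = lead_coef P *: \prod_(r <- rs) ('X - r%:P) ->
  P %/ gcdp P P^`() %= \prod_(r <- undup rs) ('X - r%:P).
Proof.
move=> P_neq0 P_eq; set g := gcdp P P^`(); set q := P %/ g.
set Q := \prod_(r <- undup rs) ('X - r%:P).
have P_qg : P = q * g by rewrite divpK ?dvdp_gcdl.
have [H [prodE H_dvd]] := prod_XsubC_undup rs.
pose cH := lead_coef P *: H.
have P_cHQ : P = cH * Q by rewrite {1}P_eq prodE scalerAl.
have cH_neq0 : cH != 0 by apply: contraNneq P_neq0 => cH0; rewrite P_cHQ cH0 mul0r.
have /dvdpP [L g_eq] : cH %| g.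
  rewrite dvdp_gcd {1}P_cHQ dvdp_mulr //= [in P^`()]P_eq derivZ.
  by rewrite /cH dvdpZl ?dvdpZr ?lead_coef_eq0.
have q_dvd_Q : q %| Q.
  apply/dvdpP; exists L; apply: (mulIf cH_neq0).
  by rewrite [L * q]mulrC -mulrA -g_eq -P_qg P_cHQ mulrC.
have [T q_eq] : exists T, q = T * Q.
  apply: uniq_roots_prod_XsubC; last by rewrite uniq_rootsE undup_uniq.
  apply/allP => x; rewrite mem_undup => x_rs.
  apply: (root_cofactor_deriv P_neq0 _ P_qg); last exact: dvdp_gcdr.
  by rewrite P_eq rootZ ?lead_coef_eq0 // root_prod_XsubC.
by rewrite /eqp q_dvd_Q q_eq dvdp_mull.
Qed.

Lemma monic_eqp_polyOver (S : divringClosed F) (p q : {poly F}) :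
  q \is monic -> p %= q -> p \is a polyOver S -> q \is a polyOver S.
Proof.
move=> q_monic pq Sp; have p_neq0 : p != 0.
  by apply: contraTneq pq => ->; rewrite eqp_sym eqp0 monic_neq0.
have p_eq := eqp_eq pq; rewrite (monicP q_monic) scale1r in p_eq.
have -> : q = (lead_coef p)^-1 *: p.
  by rewrite {2}p_eq scalerA mulVf ?lead_coef_eq0 ?scale1r.
by rewrite polyOverZ ?rpredV //; apply/polyOverP.
Qed.

Lemma prod_undup_polyOver (S : divringClosed F) (P : {poly F}) (rs : seq F) :
  P != 0 -> P = lead_coef P *: \prod_(r <- rs) ('X - r%:P) -> P \is a polyOver S ->
  \prod_(r <- undup rs) ('X - r%:P) \is a polyOver S.
Proof.
move=> P_neq0 P_eq SP; apply: monic_eqp_polyOver (squarefree_part_eqp P_neq0 P_eq) _.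
  exact: monic_prod_XsubC.
by rewrite divp_polyOver ?gcdp_polyOver ?polyOver_deriv.
Qed.

End SquarefreePart.

Section SymmetricValues.
Variables (R : numFieldType) (m : nat) (S : divringClosed R).

Lemma rat_eval_closed (w : 'I_m -> R) (t : {mpoly rat[m]}) :
  (forall i, w i \in S) -> rat_eval w t \in S.
Proof.
move=> Sw; rewrite /rat_eval mevalE; apply: rpred_sum => mm _.
rewrite mcoeff_map_mpoly rpredM ?rpred_rat //.
by apply: rpred_prod => i _; rewrite rpredX.
Qed.

Variable p : 'I_m -> R.
Hypothesis roots_polyOver : \prod_(i < m) ('X - (p i)%:P) \is a polyOver S.

Lemma mesym_in k : (mesym m R k).@[p] \in S.
Proof.
have [k_le|k_gt] := leqP k m; last by rewrite mesym_geqnE // meval0 rpred0.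
pose cs := [tuple p i | i < m].
have := mroots_coeff cs (Ordinal (k_le : (k < m.+1)%N)) => /=.
have -> : \prod_(c <- cs) ('X - c%:P) = \prod_(i < m) ('X - (p i)%:P).
  by rewrite big_tuple; apply: eq_bigr => i _; rewrite tnth_mktuple.
have -> : (mesym m R k).@[tnth cs] = (mesym m R k).@[p].
  by apply: meval_eq => i; rewrite tnth_mktuple.
move=> coefE; have -> : (mesym m R k).@[p] =
    (-1) ^+ k * (\prod_(i < m) ('X - (p i)%:P))`_(m - k).
  by rewrite coefE mulrA -exprMn mulrNN mulr1 expr1n mul1r.
by rewrite rpredM ?rpredX ?rpredN ?rpred1 //; apply/polyOverP.
Qed.

Lemma rat_eval_sym_in (f : {mpoly rat[m]}) : f \is symmetric -> rat_eval p f \in S.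
Proof.
move=> f_sym; have [t [tE _]] := sym_fundamental f_sym.
rewrite /rat_eval -tE map_mpoly_comp; last exact: fmorph_inj.
rewrite comp_mpoly_meval; apply: rat_eval_closed => i.
rewrite tnth_map tnth_mktuple.
have -> : map_mpoly (ratr : rat -> R) (mesym m rat i.+1) = mesym m R i.+1.
  by rewrite !mesymE raddf_sum /=; apply: eq_bigr => h _; apply: map_mpolyX.
exact: mesym_in.
Qed.

End SymmetricValues.

Section DistinctPairs.
Variable m : nat.

Lemma perm_pair_inj (s : 'S_m) : injective (fun u : 'I_m * 'I_m => (s u.1, s u.2)).
Proof. by move=> [a b] [c d] /= [/perm_inj -> /perm_inj ->]. Qed.

Lemma msymX (s : 'S_m) (i : 'I_m) : msym s ('X_i : {mpoly rat[m]}) = 'X_(s i).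
Proof. by rewrite /msym mmapX mmap1U. Qed.

Definition sqr_diffs_mpoly : {poly {mpoly rat[m]}} :=
  \prod_(u : 'I_m * 'I_m | u.1 != u.2) ('X - (('X_u.1 - 'X_u.2) ^+ 2)%:P).

Definition sum_sqr_diffs_mpoly : {mpoly rat[m]} :=
  \sum_(u : 'I_m * 'I_m | u.1 != u.2) ('X_u.1 - 'X_u.2) ^+ 2.

Lemma sqr_diffs_mpoly_sym k : sqr_diffs_mpoly`_k \is symmetric.
Proof.
apply/issymP => s; rewrite -coef_map.
suff -> : map_poly (msym s) sqr_diffs_mpoly = sqr_diffs_mpoly by [].
rewrite /sqr_diffs_mpoly rmorph_prod [RHS](reindex_inj (@perm_pair_inj s)) /=.
apply: eq_big => [u|u _]; first by rewrite (inj_eq perm_inj).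
by rewrite rmorphB /= map_polyX map_polyC /= rmorphXn rmorphB /= !msymX.
Qed.

Lemma sum_sqr_diffs_mpoly_sym : sum_sqr_diffs_mpoly \is symmetric.
Proof.
apply/issymP => s; rewrite /sum_sqr_diffs_mpoly rmorph_sum.
rewrite [RHS](reindex_inj (@perm_pair_inj s)) /=.
apply: eq_big => [u|u _]; first by rewrite (inj_eq perm_inj).
by rewrite rmorphXn rmorphB /= !msymX.
Qed.

End DistinctPairs.

Lemma horner_deriv_prod_XsubC (F : fieldType) (I : Type) (r : seq I) (P : pred I)
    (a : I -> F) (c : F) : (forall x, P x -> c - a x != 0) ->
  (\prod_(x <- r | P x) ('X - (a x)%:P))^`().[c] =
  (\prod_(x <- r | P x) ('X - (a x)%:P)).[c] * \sum_(x <- r | P x) (c - a x)^-1.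
Proof.
move=> a_neq; elim: r => [|y r IH].
  by rewrite !big_nil mulr0 -polyC1 derivC horner0.
rewrite !big_cons; case: ifP => // Py.
rewrite derivM derivXsubC mul1r hornerD !hornerM IH hornerXsubC.
by field; apply: a_neq.
Qed.

Section SqrDiffs.
Variables (R : rcfType) (m : nat) (p : 'I_m -> R) (S : divringClosed R).
Hypothesis roots_polyOver : \prod_(i < m) ('X - (p i)%:P) \is a polyOver S.

Definition sqr_diffs_poly : {poly R} :=
  \prod_(u : 'I_m * 'I_m | u.1 != u.2) ('X - ((p u.1 - p u.2) ^+ 2)%:P).

Lemma map_sqr_diffs_mpoly : map_poly (rat_eval p) (sqr_diffs_mpoly m) = sqr_diffs_poly.
Proof.
rewrite rmorph_prod; apply: eq_bigr => u _.
by rewrite rmorphB /= map_polyX map_polyC /= rmorphXn rmorphB /= !rat_eval_X.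
Qed.

Lemma sqr_diffs_poly_over : sqr_diffs_poly \is a polyOver S.
Proof.
apply/polyOverP => k; rewrite -map_sqr_diffs_mpoly coef_map /=.
exact/rat_eval_sym_in/sqr_diffs_mpoly_sym.
Qed.

Lemma pairsum_sqr_in : pairsum p (fun d => d ^+ 2) \in S.
Proof.
have sum_eq : rat_eval p (sum_sqr_diffs_mpoly m) = pairsum p (fun d => d ^+ 2) *+ 2.
  rewrite -sum_distinct_pairs => [|d]; last exact: sqrrN.
  by rewrite rmorph_sum; apply: eq_bigr => u _; rewrite rmorphXn rmorphB /= !rat_eval_X.
have -> : pairsum p (fun d => d ^+ 2) = rat_eval p (sum_sqr_diffs_mpoly m) / 2%:R.
  by rewrite sum_eq -(mulr_natr (pairsum _ _)) mulfK ?pnatr_eq0.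
by rewrite rpred_div ?rpred_nat ?rat_eval_sym_in ?sum_sqr_diffs_mpoly_sym.
Qed.

Lemma pairsum_inv_in (c : R) : c \in S ->
  (forall i j : 'I_m, (i < j)%N -> (p i - p j) ^+ 2 - c != 0) ->
  pairsum p (fun d => (d ^+ 2 - c)^-1) \in S.
Proof.
move=> Sc c_neq; pose f d := (d ^+ 2 - c)^-1.
have c_neq_distinct (u : 'I_m * 'I_m) : u.1 != u.2 -> c - (p u.1 - p u.2) ^+ 2 != 0.
  by move=> u_neq; rewrite -oppr_eq0 opprB (sqr_diff_neq (Q := fun x => x - c != 0)).
have F_neq0 : sqr_diffs_poly.[c] != 0.
  by rewrite horner_prod; apply/prodf_neq0 => u /c_neq_distinct; rewrite hornerXsubC.
have sum_f : \sum_(u : 'I_m * 'I_m | u.1 != u.2) (c - (p u.1 - p u.2) ^+ 2)^-1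
    = - (pairsum p f *+ 2).
  rewrite -sum_distinct_pairs => [|d]; last by rewrite /f sqrrN.
  by rewrite -sumrN; apply: eq_bigr => u _; rewrite /f -invrN opprB.
have -> : pairsum p f = - (sqr_diffs_poly^`().[c] / sqr_diffs_poly.[c]) / 2%:R.
  rewrite horner_deriv_prod_XsubC // sum_f mulrAC mulfV // mul1r opprK.
  by rewrite -(mulr_natr (pairsum _ _)) mulfK ?pnatr_eq0.
have F_over := sqr_diffs_poly_over.
by rewrite rpred_div ?rpredN ?rpred_nat ?rpred_div ?rpred_horner ?polyOver_deriv.
Qed.

End SqrDiffs.

Lemma polyOver_rat_values (R : rcfType) (P : {poly R}) :
  P \is a polyOver (rat_values (@coefs R P)).
Proof.
apply/polyOverP => i; have [i_lt|i_ge] := ltnP i (size P).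
  by rewrite -[P`_i]/(@coefs R P (Ordinal i_lt)) -rat_eval_X rat_eval_in.
by rewrite nth_default ?rpred0.
Qed.

Section RealRoots.
Variables (R : rcfType) (P : {poly R}) (m : nat) (p : 'I_m -> R).
Hypotheses (P_neq0 : P != 0) (P_real : all_roots_real P) (m_ge3 : (3 <= m)%N).
Hypotheses (p_incr : forall i j : 'I_m, (i < j)%N -> p i < p j)
  (P_roots : forall x : R, root P x <-> exists i : 'I_m, x = p i).

Let S := rat_values (@coefs R P).

Lemma roots_polyOver : \prod_(i < m) ('X - (p i)%:P) \is a polyOver S.
Proof.
have [rs P_eq] := P_real.
have p_inj : injective p.
  move=> i j pij; apply/eqP; apply: contraT.
  by rewrite -val_eqE neq_ltn => /orP [] /p_incr; rewrite pij ltxx.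
have -> : \prod_(i < m) ('X - (p i)%:P) = \prod_(x <- map p (enum 'I_m)) ('X - x%:P).
  by rewrite big_map big_enum.
rewrite -(perm_big _ (uniq_perm (undup_uniq rs) _ _)).
- exact: prod_undup_polyOver P_neq0 P_eq (polyOver_rat_values P).
- by rewrite map_inj_uniq ?enum_uniq.
move=> x; have -> : (x \in undup rs) = root P x.
  by rewrite mem_undup P_eq rootZ ?lead_coef_eq0 // root_prod_XsubC.
apply/idP/mapP => [/P_roots [i ->]|[i _ ->]]; first by exists i; rewrite ?mem_enum.
by apply/P_roots; exists i.
Qed.

Lemma mu2_in k : mu2 p k \in S.
Proof.
have step_in := pairsum_inv_in roots_polyOver.
elim: k => [|k IH]; rewrite ?mu2_0 ?mu2S /pair_step rpredD ?rpredV ?rpred0 //.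
  exact: step_in (rpred0 _) (wd_step_below m_ge3 (sqr_diff_gt0 p_incr)).1.
exact: step_in IH (wd_step_below m_ge3 (mu2_bounds m_ge3 p_incr k).2).1.
Qed.

Lemma M2_in k : M2 p k \in S.
Proof.
have step_in := pairsum_inv_in roots_polyOver.
elim: k => [|k IH]; first exact: pairsum_sqr_in roots_polyOver.
rewrite M2S /pair_step rpredD ?rpredV //.
exact: step_in IH (wd_step_above m_ge3 (M2_above m_ge3 p_incr k)).1.
Qed.

End RealRoots.

Theorem mainTheorem6 (R : rcfType) (P : {poly R}) (m : nat) (p : 'I_m -> R) :
  P != 0 ->
  all_roots_real P ->
  (3 <= m)%N ->
  (forall i j : 'I_m, (i < j)%N -> p i < p j) ->
  (forall x : R, root P x <-> exists i : 'I_m, x = p i) ->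
  (* well defined *)
  [/\ pairsum p (fun d => (d ^+ 2)^-1) != 0,
      (forall k, wd_step p (mu2 p k)) &
      (forall k, wd_step p (M2 p k))] /\
  (* bounds *)
  (forall k, 0 < mu2 p k /\ 0 < muk p k /\ muk p k < mudist p) /\
  (forall k, 0 < M2 p k /\ Mdiam p < Mk p k) /\
  (* rationality in the coefficients of P *)
  (forall k, rat_fun_of_coefs P (mu2 p k) /\ rat_fun_of_coefs P (M2 p k)).
Proof.
move=> P_neq0 P_real m_ge3 p_incr P_roots.
have mu2_lt := mu2_bounds m_ge3 p_incr; have M2_gt := M2_above m_ge3 p_incr.
split; [split|split; [|split]].
- rewrite gt_eqF // pairsum_gt0 // => i j ij.
  by rewrite invr_gt0 (sqr_diff_gt0 p_incr).
- by move=> k; exact (wd_step_below m_ge3 (mu2_lt k).2).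
- by move=> k; exact (wd_step_above m_ge3 (M2_gt k)).
- move=> k; have [mu2_gt0 _] := mu2_lt k.
  by rewrite /muk sqrtr_gt0 mu2_gt0 -/(muk p k) muk_lt_mudist.
- by move=> k; rewrite M2_gt0 // Mdiam_lt_Mk.
- by move=> k; split; apply/rat_valuesP; [apply: mu2_in | apply: M2_in].
Qed.
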